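(* Let $G$ be a finite simple graph with $m$ edges and maximum degree $\Delta$, such that each connected component of $G$ has at least one edge. Then $$ M_1(G) \le \max \big\{2\Delta^2 +m^2 +(6-2\Delta) m - 2\Delta -4\,,\; 2\Delta^2 +m^2 +(4-2\Delta) m + 4 \,,\; m(m-1) \big\}, $$ where $M_1(G)=\sum_{u\in V(G)} d_u^2$ is the first Zagreb index.
   Context: $d_u$ denotes the degree of vertex $u$. The first Zagreb index is $M_1(G)=\sum_{uv\in E(G)}(d_u+d_v)=\sum_{u\in V(G)}d_u^2$. *)

From mathcomp Require Import all_boot all_order all_algebra.
Set Implicit Arguments. Unset Strict Implicit. Unset Printing Implicit Defensive.

Definition simple_graph (T : finType) (e : rel T) : Prop :=
  symmetric e /\ irreflexive e.

Definition edges (T : finType) (e : rel T) : {set {set T}} :=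
  [set A : {set T} | [exists u, exists v, e u v && (A == [set u; v])]].

Definition nedges (T : finType) (e : rel T) : nat := #|edges e|.

Definition deg (T : finType) (e : rel T) (u : T) : nat := #|[set v | e u v]|.

(* maximum degree Delta (0 for the empty graph) *)
Definition maxdeg (T : finType) (e : rel T) : nat := \max_(u : T) deg e u.

Definition M1 (T : finType) (e : rel T) : nat := \sum_(u : T) (deg e u) ^ 2.

Definition components_have_edges (T : finType) (e : rel T) : Prop :=
  forall u : T, exists v w : T, connect e u v && e v w.

From mathcomp Require Import all_boot all_order all_algebra.
From mathcomp Require Import zify lra.
Set Implicit Arguments. Unset Strict Implicit. Unset Printing Implicit Defensive.
Import Order.TTheory GRing.Theory Num.Theory.

(* Counting pairs (u, v) with u ~ v weighted by d_u + d_v gives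
   2 M1(G) = sum_{u ~ v} (d_u + d_v); the edges at u and at v form two sets
   sharing only uv, so d_u + d_v <= m + 1 and M1(G) <= m (m + 1).
   Deleting a vertex w of maximum degree D leaves a graph G' with
   k = m - D edges, and M1(G) <= D (D + 1) + M1(G') + 2 sum_{v ~ w} d'_v
   <= D (D + 1) + k (k + 1) + 4 k.  The right-hand side of the theorem
   dominates D (D + 1) + k (k + 5): through its first term when k + 3 D >= 4,
   through its second term otherwise. *)

Lemma card_sum_indicator (T : finType) (A : {pred T}) :
  #|A| = \sum_x (x \in A : nat).
Proof. by rewrite -sum1_card big_mkcond. Qed.

Section SimpleGraph.
Variables (T : finType) (e : rel T).
Hypotheses (e_sym : symmetric e) (e_irr : irreflexive e).

Lemma degE u : deg e u = \sum_v (e u v : nat).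
Proof. by rewrite /deg card_sum_indicator; apply: eq_bigr => v _; rewrite inE. Qed.

Lemma degE_neq u : deg e u = \sum_(v | v != u) (e u v : nat).
Proof. by rewrite degE (bigD1 u) //= e_irr. Qed.

Lemma card_edge A : A \in edges e -> #|A| = 2.
Proof.
rewrite inE => /existsP [x /existsP [y /andP [exy /eqP ->]]].
by rewrite cards2; case: eqP exy => [->|//]; rewrite e_irr.
Qed.

Lemma card_edges_at u : #|[set A in edges e | u \in A]| = deg e u.
Proof.
have -> : [set A in edges e | u \in A] = [set [set u; v] | v in [set v | e u v]].
  apply/setP => A; rewrite !inE; apply/andP/imsetP.
  - case=> /existsP [x /existsP [y /andP [exy /eqP ->]]].
    rewrite !inE => /orP [/eqP -> | /eqP ->]; first by exists y; rewrite ?inE.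
    by exists x; rewrite ?inE 1?e_sym // setUC.
  - case=> v; rewrite inE => euv ->; rewrite !inE eqxx; split=> //.
    by apply/existsP; exists u; apply/existsP; exists v; rewrite euv eqxx.
rewrite card_in_imset // => v1 v2; rewrite !inE => euv1 _ E.
have : v1 \in [set u; v2] by rewrite -E !inE eqxx orbT.
by rewrite !inE => /orP [/eqP v1u | /eqP //]; move: euv1; rewrite v1u e_irr.
Qed.

Lemma sum_deg : \sum_u deg e u = 2 * nedges e.
Proof.
transitivity (\sum_u \sum_A ((A \in edges e) && (u \in A) : nat)).
  apply: eq_bigr => u _; rewrite -card_edges_at card_sum_indicator.
  by apply: eq_bigr => A _; rewrite inE.
rewrite exchange_big /nedges card_sum_indicator big_distrr /=.
apply: eq_bigr => A _; case: (boolP (A \in edges e)) => [A_edge | _].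
  by rewrite muln1 -(card_edge A_edge) card_sum_indicator.
by rewrite muln0 big1.
Qed.

Lemma degD_edge_le u v : e u v -> deg e u + deg e v <= nedges e + 1.
Proof.
move=> euv; rewrite -!card_edges_at -cardsUI /nedges.
apply: leq_add.
  by apply: subset_leq_card; rewrite subUset; apply/andP; split;
    apply/subsetP => A; rewrite inE => /andP [].
rewrite -(cards1 [set u; v]); apply: subset_leq_card.
apply/subsetP => A /setIP [/setIdP [A_edge uA] /setIdP [_ vA]]; rewrite in_set1.
have u_neq_v : u != v by apply: contraTneq euv => ->; rewrite e_irr.
rewrite eq_sym eqEcard (card_edge A_edge) cards2 u_neq_v andbT.
by rewrite subUset !sub1set uA vA.
Qed.

Lemma double_M1E : 2 * M1 e = \sum_u \sum_v e u v * (deg e u + deg e v).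
Proof.
have M1_src : M1 e = \sum_u \sum_v e u v * deg e u.
  by apply: eq_bigr => u _; rewrite -big_distrl /= -degE.
have M1_dst : M1 e = \sum_u \sum_v e u v * deg e v.
  rewrite exchange_big; apply: eq_bigr => v _; rewrite -big_distrl /= degE.
  by congr (_ * _); apply: eq_bigr => u _; rewrite e_sym.
rewrite mul2n -addnn {1}M1_src M1_dst -big_split /=.
by apply: eq_bigr => u _; rewrite -big_split /=; apply: eq_bigr => v _; rewrite mulnDr.
Qed.

Lemma M1_le_nedges : M1 e <= nedges e * (nedges e + 1).
Proof.
rewrite -(leq_pmul2l (isT : 0 < 2)) double_M1E mulnA -sum_deg big_distrl /=.
apply: leq_sum => u _; rewrite [X in _ <= X * _]degE big_distrl /=.
by apply: leq_sum => v _; case euv: (e u v); rewrite ?mul1n ?degD_edge_le.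
Qed.

End SimpleGraph.

Section VertexDeletion.
Variables (T : finType) (e : rel T) (w : T).
Hypotheses (e_sym : symmetric e) (e_irr : irreflexive e).

Definition delv : rel T := fun u v => [&& e u v, u != w & v != w].

Lemma delv_sym : symmetric delv.
Proof. by move=> u v; rewrite /delv e_sym [(u != w) && _]andbC. Qed.

Lemma delv_irr : irreflexive delv.
Proof. by move=> u; rewrite /delv e_irr. Qed.

Lemma deg_delv_self : deg delv w = 0.
Proof. by rewrite degE big1 // => v _; rewrite /delv eqxx andbF. Qed.

Lemma deg_delv v : v != w -> deg e v = deg delv v + e w v.
Proof.
move=> vw; rewrite !degE (bigD1 w) //= [in RHS](bigD1 w) //= /delv eqxx !andbF.
rewrite add0n addnC e_sym; congr (_ + _); apply: eq_bigr => x xw.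
by rewrite vw xw /= andbT.
Qed.

Lemma nedges_delv : nedges e = nedges delv + deg e w.
Proof.
have sum_deg_split : \sum_v deg e v = \sum_v deg delv v + 2 * deg e w.
  rewrite (bigD1 w) //= [in RHS](bigD1 w) //= deg_delv_self add0n.
  rewrite (eq_bigr (fun v => deg delv v + e w v)) => [|v]; last exact: deg_delv.
  by rewrite big_split /= -(degE_neq e_irr); lia.
move: sum_deg_split; rewrite !sum_deg //; [lia | exact: delv_sym | exact: delv_irr].
Qed.

Lemma M1_delv_le :
  M1 e <= deg e w * (deg e w).+1 + M1 delv + 4 * nedges delv.
Proof.
rewrite -[4]/(2 * 2) -mulnA -sum_deg; [|exact: delv_sym|exact: delv_irr].
rewrite /M1 (bigD1 w) //= [\sum_v deg delv v ^ 2](bigD1 w) //=.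
rewrite [\sum_v deg delv v](bigD1 w) //= deg_delv_self add0n exp0n // add0n.
rewrite mulnSr mulnn -!addnA leq_add2l.
rewrite (degE_neq e_irr) big_distrr /= -!big_split /=.
by apply: leq_sum => v vw; rewrite deg_delv //; case: (e w v) => /=; nia.
Qed.

End VertexDeletion.

Lemma M1_le_maxdeg (T : finType) (e : rel T) :
  symmetric e -> irreflexive e ->
  exists2 k, nedges e = k + maxdeg e &
    M1 e <= maxdeg e * (maxdeg e).+1 + k * (k + 5).
Proof.
move=> e_sym e_irr.
have [[w Dw] | D0] : (exists w, maxdeg e = deg e w) \/ maxdeg e = 0.
  case: (posnP #|T|) => [/card0_eq T0 | /(bigop.eq_bigmax (deg e)) [w Dw]].
    by right; rewrite /maxdeg big_pred0.
  by left; exists w.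
- exists (nedges (delv e w)); rewrite Dw; first exact: nedges_delv.
  apply: leq_trans (M1_delv_le w e_sym e_irr) _.
  rewrite -addnA leq_add2l.
  have := M1_le_nedges (delv_sym w e_sym) (delv_irr w e_irr); lia.
- exists (nedges e); rewrite D0 ?addn0 //.
  by apply: leq_trans (M1_le_nedges e_sym e_irr) _; rewrite leq_mul2l leq_add2l orbT.
Qed.

Local Open Scope ring_scope.

Lemma zagreb_bound_ge (R : realDomainType) (D m : R) : 0 <= D <= m ->
  D * (D + 1) + (m - D) * (m - D + 5) <=
  Num.max (2 * D ^+ 2 + m ^+ 2 + (6 - 2 * D) * m - 2 * D - 4)
    (Num.max (2 * D ^+ 2 + m ^+ 2 + (4 - 2 * D) * m + 4) (m * (m - 1))).
Proof.
case/andP=> D_ge0 Dm; rewrite !le_max.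
have [large|small] := lerP 4 (m + 2 * D).
  by apply/orP; left; lra.
by apply/orP; right; apply/orP; left; lra.
Qed.

Theorem theorem2p1 (T : finType) (e : rel T) :
  simple_graph e -> components_have_edges e ->
  let m : int := (nedges e)%:Z in
  let D : int := (maxdeg e)%:Z in
  ((M1 e)%:Z <=
     Num.max (2 * D ^+ 2 + m ^+ 2 + (6 - 2 * D) * m - 2 * D - 4)
       (Num.max (2 * D ^+ 2 + m ^+ 2 + (4 - 2 * D) * m + 4)
                (m * (m - 1))))%R.
Proof.
move=> [e_sym e_irr] _ /=.
have [k mE M1_le] := M1_le_maxdeg e_sym e_irr.
rewrite mE PoszD; apply: le_trans (zagreb_bound_ge _); last by lia.
by rewrite addrK; lia.
Qed.
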